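(* Let $S$ be a reflective numerical semigroup with $\mathrm{g}(S)=g\ge1$ and $\mathrm{m}(S)=a$, and let $r\in\{1,\dots,a-1\}$ satisfy $g\equiv r\pmod a$. Then \[ \mathrm{Ap}(S;a)=\{0,\ 2g+a-r\}\cup\big(\{g+1,\dots,g+(a-1)\}\setminus\{g+(a-r)\}\big). \] In particular, if $g\equiv -1\pmod a$, then $\mathrm{Ap}(S;a)=\{0,2g+1\}\cup\{g+2,\dots,g+(a-1)\}$.
   Context: A numerical semigroup is a submonoid $S$ of $(\mathbb{N}_0,+)$ with finite complement. Its genus $\mathrm{g}(S)$ is the number of elements of $\mathbb{N}_0\setminus S$, and its multiplicity $\mathrm{m}(S)$ is the smallest positive element of $S$. For $0\ne t\in S$, the Apéry set of $S$ relative to $t$ is $\mathrm{Ap}(S;t)=\{s\in S: s-t\notin S\}$. A numerical semigroup $S$ of genus $g\ge1$ is called reflective if for every $z\in\{0,1,\dots,g-1\}$ exactly one of $z$ and $z+g$ belongs to $S$. *)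

From mathcomp Require Import all_boot.
Set Implicit Arguments. Unset Strict Implicit. Unset Printing Implicit Defensive.

Definition numerical_semigroup (S : pred nat) : Prop :=
  [/\ S 0,
      (forall x y, S x -> S y -> S (x + y)) &
      exists N, forall n, N <= n -> S n].

Definition genus (S : pred nat) (g : nat) : Prop :=
  exists gaps : seq nat,
    [/\ uniq gaps, (forall n, (n \in gaps) = ~~ S n) & size gaps = g].

Definition multiplicity (S : pred nat) (a : nat) : Prop :=
  [/\ 0 < a, S a & forall b, 0 < b -> b < a -> ~~ S b].

(* Apery set Ap(S;t) = {s in S : s - t notin S}; s - t is taken in Z,
   so if s < t then s - t is negative and hence not in S. *)
Definition Apery (S : pred nat) (t : nat) : pred nat :=
  fun s => S s && ((s < t) || ~~ S (s - t)).

Definition reflective (S : pred nat) (g : nat) : Prop :=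
  forall z, z < g -> S z (+) S (z + g).

From mathcomp Require Import all_boot zify.

(* Reflectivity pairs each [z < g] with [z + g] and picks exactly one gap from
   each pair; as [S] has genus [g], these are all the gaps, so every gap is
   below [2g].  By induction on [z < g], [z] is in [S] iff [a] divides it: if
   [z - a] is a gap then [z - a + g], hence [z + g], is in [S], so [z] is a gap.
   Hence on [[g, 2g)] the elements of [S] are the [x] with [a] not dividing
   [x - g].  Reading off the least element of [S] in each residue class mod [a]
   gives [0], the [g + i] with [0 < i < a] except the multiple [g + a - r] of
   [a], and, in the class of [g], the successor [2g + a - r] of the gap
   [2g - r]. *)

Lemma dvdn_near_eq {a m y} :
  a %| m -> y < m + a -> m < y + a -> (a %| y) = (y == m).
Proof.
move=> /dvdnP[q ->] lt_y lt_m.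
apply/idP/eqP => [/dvdnP[p def_y]|->]; last exact: dvdn_mull.
rewrite {}def_y in lt_y lt_m *; congr (_ * _).
have a_gt0 : 0 < a by case: a lt_y lt_m; rewrite ?muln0.
rewrite -mulSnr ltn_mul2r a_gt0 ltnS /= in lt_y.
rewrite -mulSnr ltn_mul2r a_gt0 ltnS /= in lt_m.
by apply/anti_leq; rewrite lt_y lt_m.
Qed.

Section ReflectiveSemigroup.

Variables (S : pred nat) (g a r : nat).
Hypotheses (S0 : S 0) (S_add : forall x y, S x -> S y -> S (x + y)).
Hypotheses (S_genus : genus S g) (S_reflective : reflective S g).
Hypotheses (g_gt0 : 0 < g) (S_multiplicity : multiplicity S a).
Hypotheses (g_mod : g %% a = r) (r_gt0 : 0 < r).

Lemma reflective_gap_lt n : ~~ S n -> n < 2 * g.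
Proof.
move=> nSn; case: S_genus => gaps [uniq_gaps mem_gaps size_gaps].
pose pick_gap z := if S z then z + g else z.
have sub_gaps : {subset map pick_gap (iota 0 g) <= gaps}.
  move=> y /mapP[z]; rewrite mem_iota add0n => /andP[_ lt_zg] ->.
  rewrite mem_gaps /pick_gap.
  by have := S_reflective z lt_zg; case Sz: (S z) => //=; rewrite Sz.
have uniq_picks : uniq (map pick_gap (iota 0 g)).
  rewrite map_inj_in_uniq ?iota_uniq // => z1 z2.
  by rewrite !mem_iota /pick_gap; case: (S z1); case: (S z2); lia.
have size_picks : size gaps <= size (map pick_gap (iota 0 g)).
  by rewrite size_map size_iota size_gaps.
have [_ eq_gaps] := uniq_min_size uniq_picks sub_gaps size_picks.
have : n \in gaps by rewrite mem_gaps.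
rewrite -eq_gaps => /mapP[z]; rewrite mem_iota add0n /pick_gap => /andP[_].
by case: (S z); lia.
Qed.

Lemma reflective_mem_ge n : 2 * g <= n -> S n.
Proof.
by move=> le_n; apply: contraTT le_n => /reflective_gap_lt; rewrite -ltnNge.
Qed.

Let a_gt0 : 0 < a. Proof. by case: S_multiplicity. Qed.
Let r_le_g : r <= g. Proof. by rewrite -g_mod leq_mod. Qed.

Lemma mem_muln_multiplicity k : S (k * a).
Proof.
case: S_multiplicity => _ Sa _.
by elim: k => [|k IHk] //; rewrite mulSn; apply: S_add.
Qed.

Lemma mem_lt_genus z : z < g -> S z = (a %| z).
Proof.
case: S_multiplicity => _ Sa S_lt_a lt_zg.
apply/idP/idP => [|/dvdnP[k ->]]; last exact: mem_muln_multiplicity.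
apply: contraTT; elim: z {-2}z (leqnn z) lt_zg => [|n IHn] z le_zn lt_zg ndvd.
  by move: le_zn ndvd; rewrite leqn0 => /eqP->; rewrite dvdn0.
have [lt_za|le_az] := ltnP z a.
  by apply: S_lt_a => //; rewrite lt0n; apply: contraNneq ndvd => ->.
have nS_za : ~~ S (z - a).
  by apply: IHn; [lia | lia | rewrite dvdn_subl].
have S_zag : S (z - a + g).
  have lt_zag : z - a < g by lia.
  by have := S_reflective (z - a) lt_zag; move: nS_za; case: (S (z - a)).
have S_zg : S (z + g).
  by rewrite (_ : z + g = z - a + g + a); [apply: S_add | lia].
by have := S_reflective z lt_zg; rewrite S_zg; case: (S z).
Qed.

Lemma mem_lt_2genus x : g <= x < 2 * g -> S x = ~~ (a %| x - g).
Proof.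
move=> /andP[le_gx lt_x]; have lt_xg : x - g < g by lia.
have := S_reflective (x - g) lt_xg; rewrite subnK // mem_lt_genus //.
by case: (S x); case: (a %| x - g).
Qed.

Lemma mem_genus_window x : g <= x < g + a -> S x = (x != g).
Proof.
move=> /andP[le_gx lt_x]; have [lt_x2g|le_2gx] := ltnP x (2 * g).
  rewrite mem_lt_2genus ?le_gx // (dvdn_near_eq (dvdn0 a)); lia.
by rewrite reflective_mem_ge //; lia.
Qed.

Lemma dvdn_genus_subr : a %| g - r.
Proof. by rewrite -g_mod {1}(divn_eq g a) addnK dvdn_mull. Qed.

Lemma dvdn_genus_addr : a %| g + a - r.
Proof. by rewrite -addnBAC // dvdn_addl // dvdn_genus_subr. Qed.

Lemma Apery_lt_genus x : x < g -> Apery S a x = (x == 0).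
Proof.
move=> lt_xg; rewrite /Apery mem_lt_genus //.
have [lt_xa|le_ax] := ltnP x a.
  by rewrite andbT (dvdn_near_eq (dvdn0 a)) //; lia.
rewrite mem_lt_genus ?dvdn_subl //; last lia.
by case: (a %| x); lia.
Qed.

Lemma Apery_genus_window x :
  g <= x < g + a -> Apery S a x = (x != g) && (x != g + a - r).
Proof.
move=> /andP[le_gx lt_x]; rewrite /Apery mem_genus_window ?le_gx //.
have [lt_xa|le_ax] := ltnP x a; first by rewrite andbT; lia.
rewrite mem_lt_genus ?dvdn_subl // ?(dvdn_near_eq dvdn_genus_addr); lia.
Qed.

Lemma Apery_above_window x : g + a <= x -> Apery S a x = (x == 2 * g + a - r).
Proof.
move=> le_x; rewrite /Apery ltnNge (_ : a <= x) /=; last lia.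
have [lt_x2g|le_2gx] := ltnP (x - a) (2 * g); last first.
  by rewrite [S (x - a)]reflective_mem_ge // andbF; lia.
rewrite [S (x - a)]mem_lt_2genus ?negbK; last lia.
have [lt_x|le_x2] := ltnP x (2 * g).
  rewrite mem_lt_2genus; last lia.
  rewrite -subnDA addnC subnDA (dvdn_subl _ (dvdnn a)); last lia.
  by case: (a %| x - g); lia.
rewrite reflective_mem_ge // (dvdn_near_eq dvdn_genus_subr); lia.
Qed.

Lemma reflective_AperyE x :
  Apery S a x =
    [|| x == 0, x == 2 * g + a - r | (g < x < g + a) && (x != g + a - r)].
Proof.
have [lt_xg|le_gx] := ltnP x g; first by rewrite Apery_lt_genus //; lia.
have [lt_x|le_x] := ltnP x (g + a).
  by rewrite Apery_genus_window ?le_gx //; lia.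
by rewrite Apery_above_window //; lia.
Qed.

End ReflectiveSemigroup.

Theorem mainTheorem5 (S : pred nat) (g a r : nat) :
  numerical_semigroup S -> genus S g -> 1 <= g -> multiplicity S a ->
  reflective S g ->
  1 <= r -> r <= a - 1 -> g %% a = r ->
  (forall x, Apery S a x <->
     [\/ x = 0, x = 2 * g + a - r |
         [/\ g + 1 <= x, x <= g + (a - 1) & x <> g + (a - r)]])
  /\
  ((g + 1) %% a = 0 ->
   forall x, Apery S a x <->
     [\/ x = 0, x = 2 * g + 1 | g + 2 <= x <= g + (a - 1)]).
Proof.
move=> [S0 S_add _] S_genus g_gt0 S_mult S_refl r_gt0 le_ra g_mod.
have AperyE :=
  @reflective_AperyE S g a r S0 S_add S_genus S_refl g_gt0 S_mult g_mod r_gt0.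
have AperyP x : Apery S a x <->
    [\/ x = 0, x = 2 * g + a - r |
        [/\ g + 1 <= x, x <= g + (a - 1) & x <> g + (a - r)]].
  rewrite AperyE; split.
    case/or3P=> [/eqP-> | /eqP-> | /andP[/andP[lt_gx lt_x] ne_x]];
      try by constructor.
    by constructor 3; split; lia.
  by case=> [-> | -> | [le_x ge_x ne_x]]; lia.
split=> // g1_mod x.
have a_gt0 : 0 < a by case: S_mult.
have r_eq : r = a - 1.
  have : a %| r + 1 by rewrite /dvdn -g_mod modnDml g1_mod.
  by rewrite (dvdn_near_eq (dvdnn a)) => [/eqP||]; lia.
rewrite AperyP r_eq; split.
  case=> [-> | -> | [le_x ge_x ne_x]];
    [constructor 1 | constructor 2 | constructor 3] => //.
    lia.
  apply/andP; split; lia.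
case=> [-> | -> | /andP[le_x ge_x]];
  [constructor 1 | constructor 2 | constructor 3] => //.
  lia.
split; lia.
Qed.
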